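(* Let $k\ge 2$ be an integer. Then $\frac{k}{k+1}\le f(k,2)\le \frac{k+1}{k+2+\frac{1}{k+1}}$.
   Context: For a graph $G=(V,E)$ and an integer $k\ge 0$, a $k$-independent set is a set $S\subseteq V$ such that the induced subgraph $G[S]$ has maximum degree at most $k$; $\alpha_k(G)$ denotes the maximum cardinality of a $k$-independent set of $G$. $n(G)$ is the number of vertices and $d(G)=2|E(G)|/n(G)$ the average degree. For integers $d,k\ge 0$, $f(k,d)=\inf\left\{\frac{\alpha_k(G)}{n(G)} : G \text{ a finite simple graph with at least one vertex and } d(G)\le d\right\}$. *)

From mathcomp Require Import all_boot.
From Stdlib Require Import Reals ClassicalEpsilon.

Set Implicit Arguments.
Local Open Scope R_scope.
Unset Strict Implicit.
Unset Printing Implicit Defensive.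

Definition simple_graph (T : finType) (e : rel T) : Prop :=
  symmetric e /\ irreflexive e.

Definition k_independent (k : nat) (T : finType) (e : rel T) (S : {set T}) : bool :=
  [forall x in S, (#|[set y in S | e x y]| <= k)%nat].

Definition alpha_k (k : nat) (T : finType) (e : rel T) : nat :=
  \max_(S : {set T} | k_independent k e S) #|S|.

Definition num_edges (T : finType) (e : rel T) : nat :=
  #|[set A : {set T} | (#|A| == 2%nat) &&
       [exists x, exists y, (A == [set x; y]) && e x y]]|.

Definition avg_degree (T : finType) (e : rel T) : R :=
  (2 * INR (num_edges e) / INR #|T|).

Definition ratio_set (k d : nat) (r : R) : Prop :=
  exists (T : finType) (e : rel T),
    simple_graph e /\ (0 < #|T|)%nat /\ (avg_degree e <= INR d) /\
    r = (INR (alpha_k k e) / INR #|T|).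

Definition is_inf (P : R -> Prop) (r : R) : Prop :=
  (forall x, P x -> (r <= x)) /\ (forall b, (forall x, P x -> (b <= x)) -> (b <= r)).

Definition f_kd (k d : nat) : R :=
  epsilon (inhabits R0) (fun r => is_inf (ratio_set k d) r).

From Stdlib Require Import Reals Lra Lia ClassicalEpsilon.
From mathcomp Require Import all_boot zify.

Set Implicit Arguments.
Unset Strict Implicit.
Unset Printing Implicit Defensive.

(* Lower bound (a greedy argument, valid for every simple graph G).  Repeatedly
   delete a vertex of degree > k in the current induced subgraph.  Each deletion
   lowers the degree sum of the induced subgraph by at least 2(k+1), and the
   degree sum of G is at most 2|E|, so the surviving k-independent set misses at
   most |E|/(k+1) vertices: (k+1)(n - alpha_k(G)) <= |E|.  With d(G) <= 2, i.e.
   |E| <= n, this gives alpha_k(G)/n >= k/(k+1).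

   Upper bound (an explicit graph).  Take k disjoint stars K_{1,k+1} together
   with one "book" K_2 + (k+1) independent vertices joined to both ends.  It has
   n = (k+1)(k+2)+1 vertices and exactly n edges, and each of its k+1 components
   meets a k-independent set in at most k+1 vertices (a chosen dominating vertex
   has at most k chosen neighbours; otherwise only the k+1 leaves are chosen).
   So alpha_k/n <= (k+1)^2/((k+1)(k+2)+1), which is the claimed value. *)

Lemma card_set_sum (I : finType) (A : {set I}) (b : pred I) :
  #|[set x in A | b x]| = \sum_(x in A) (b x : nat).
Proof.
rewrite -sum1_card (eq_bigl (fun x => (x \in A) && b x)) => [|x]; last by rewrite inE.
by rewrite big_mkcondr /=; apply: eq_bigr => x _; case: (b x).
Qed.

Lemma card_fibres (I J : finType) (f : I -> J) (S : {set I}) :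
  #|S| = \sum_j #|S :&: [set x | f x == j]|.
Proof.
rewrite -sum1_card (partition_big f xpredT) //=; apply: eq_bigr => j _.
by rewrite -sum1_card; apply: eq_bigl => x; rewrite !inE.
Qed.

Section GreedyLowerBound.
Variables (T : finType) (e : rel T).
Hypothesis e_sym : symmetric e.
Hypothesis e_irr : irreflexive e.

Definition deg (S : {set T}) (x : T) : nat := #|[set y in S | e x y]|.
Definition deg_sum (S : {set T}) : nat := \sum_(x in S) deg S x.

(* Deleting v from S removes the edges at v, each counted twice. *)
Lemma deg_sum_remove (S : {set T}) (v : T) : v \in S ->
  deg_sum S = deg_sum (S :\ v) + (deg S v).*2.
Proof.
move=> vS; rewrite /deg_sum (bigD1 v) //=.
have deg_split x : x \in S :\ v -> deg S x = e x v + deg (S :\ v) x.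
  move=> xS; rewrite /deg (cardsD1 v) inE vS /=; congr (_ + _).
  by apply: eq_card => y; rewrite !inE; case: (y == v); rewrite ?andbF.
rewrite (eq_bigl (mem (S :\ v))); last by move=> x; rewrite !inE andbC.
rewrite (eq_bigr _ deg_split) big_split /= -card_set_sum.
have -> : #|[set x in S :\ v | e x v]| = deg S v.
  apply: eq_card => y; rewrite !inE e_sym.
  by case: (eqVneq y v) => [->|]; rewrite ?e_irr ?andbF.
rewrite -addnn; lia.
Qed.

Lemma greedy_k_independent (k : nat) (S : {set T}) :
  exists2 S' : {set T}, k_independent k e S' &
     ((k.+1 * #|S|).*2 <= (k.+1 * #|S'|).*2 + deg_sum S)%nat.
Proof.
have [n] := ubnP #|S|; elim: n S => // n IH S /ltnSE sizeS.
case: (boolP (k_independent k e S)) => [indS|]; first by exists S => //; lia.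
move/forall_inPn => [v vS]; rewrite -ltnNge => deg_v.
have [|S' indS' bound] := IH (S :\ v); first by move: sizeS; rewrite (cardsD1 v S) vS; lia.
exists S' => //; rewrite (deg_sum_remove vS).
by move: bound deg_v; rewrite (cardsD1 v S) vS /deg; lia.
Qed.

(* The degree sum of G is at most 2|E|: each neighbour y of x gives the edge {x,y},
   and each edge is obtained in this way from its two endpoints only. *)
Lemma deg_sum_setT : (deg_sum setT <= (num_edges e).*2)%nat.
Proof.
set E := [set A : {set T} | (#|A| == 2) &&
           [exists x, exists y, (A == [set x; y]) && e x y]].
have deg_le x : (deg setT x <= #|[set A in E | x \in A]|)%nat.
  rewrite /deg -(@card_in_imset _ _ (fun y => [set x; y])); last first.
    move=> y1 y2; rewrite !inE => xy1 _ eq12.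
    have : y1 \in [set x; y2] by rewrite -eq12 set22.
    by rewrite in_set2 => /orP[/eqP y1x|/eqP //]; move: xy1; rewrite y1x e_irr.
  apply: subset_leq_card; apply/subsetP => A /imsetP[y]; rewrite inE => /andP[_ xy] ->.
  rewrite inE set21 andbT /E inE cards2 -[x == y]negbK.
  have -> : x != y by apply: contraTneq xy => ->; rewrite e_irr.
  by apply/existsP; exists x; apply/existsP; exists y; rewrite eqxx xy.
have size_E A : A \in E -> \sum_x (x \in A : nat) = 2.
  rewrite inE => /andP[/eqP <- _]; rewrite -sum1_card [RHS]big_mkcond /=.
  by apply: eq_bigr => x _; case: (x \in A).
rewrite /deg_sum (eq_bigl xpredT) => [|x]; last by rewrite inE.
apply: (@leq_trans (\sum_x #|[set A in E | x \in A]|)); first exact: leq_sum.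
rewrite (eq_bigr _ (fun x _ => card_set_sum E (fun A => x \in A))) exchange_big /=.
by rewrite (eq_bigr _ size_E) sum_nat_const -muln2.
Qed.

Lemma alpha_k_lower (k : nat) : (k.+1 * (#|T| - alpha_k k e) <= num_edges e)%nat.
Proof.
have [S indS bound] := greedy_k_independent k setT.
have S_le : (k.+1 * #|S| <= k.+1 * alpha_k k e)%nat.
  by rewrite leq_mul2l /alpha_k (leq_bigmax_cond _ indS) orbT.
move: bound S_le (deg_sum_setT); rewrite cardsT mulnBr; lia.
Qed.
End GreedyLowerBound.

(* If every vertex of D is adjacent to all other vertices of C, and at most k+1
   vertices of C lie outside D, then a k-independent set S meets C in at most k+1
   vertices: either S contains some c in D, and S :&: C lies in c plus the at most
   k neighbours of c in S, or S :&: C avoids D. *)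
Lemma k_independent_meet_le (T : finType) (e : rel T) (k : nat) (S C D : {set T}) :
  k_independent k e S -> {in D, forall c, {in C, forall y, y != c -> e c y}} ->
  (#|C :\: D| <= k.+1)%nat -> (#|S :&: C| <= k.+1)%nat.
Proof.
move=> /forall_inP indS domD CD_le.
case: (set_0Vmem (S :&: D)) => [SD0 | [c]].
  apply: leq_trans CD_le; apply: subset_leq_card; apply/subsetP => y.
  rewrite !inE => /andP[yS ->]; rewrite andbT; apply: contraT; rewrite negbK => yD.
  by have := in_set0 y; rewrite -SD0 inE yS yD.
rewrite inE => /andP[cS cD].
apply: leq_trans (_ : #|c |: [set y in S | e c y]| <= _)%nat.
  apply: subset_leq_card; apply/subsetP => y; rewrite !inE => /andP[yS yC].
  by case: (eqVneq y c) => // ync; rewrite yS domD.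
by rewrite cardsU1 -add1n; apply: leq_add (leq_b1 _) (indS c cS).
Qed.

Section ExtremalGraph.
Variable k : nat.

(* Vertices: a special vertex None, and for each block i < k+1 a hub Some (i, None)
   and k+1 leaves Some (i, Some b).  The special vertex belongs to block 0. *)
Local Notation vtx := (option ('I_k.+1 * option 'I_k.+1)).

Definition block (x : vtx) : 'I_k.+1 := if x is Some (i, _) then i else ord0.

(* The hubs and the special vertex are the dominating vertices of their block. *)
Definition center (x : vtx) : bool := if x is Some (_, Some _) then false else true.

(* Two distinct vertices of a block are adjacent when one of them is a center:
   blocks 1..k are stars K_{1,k+1}, block 0 is the book K_2 + (k+1) leaves. *)
Definition extremal_adj : rel vtx :=
  fun x y => [&& block x == block y, x != y & center x || center y].

Lemma extremal_simple : simple_graph extremal_adj.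
Proof.
split=> [x y|x]; last by rewrite /extremal_adj !eqxx.
by rewrite /extremal_adj eq_sym [y == x]eq_sym orbC.
Qed.

Lemma card_vtx : #|{: vtx}| = (k.+1 * k.+2).+1.
Proof. by rewrite card_option card_prod card_option card_ord. Qed.

(* Each vertex pays for one edge: a leaf for its edge to the hub, the hub of block i
   for the edge joining the special vertex to the i-th leaf of block 0, and the
   special vertex for its edge to the hub of block 0. *)
Definition edge_of (t : vtx) : {set vtx} :=
  match t with
  | None => [set None; Some (ord0, None)]
  | Some (i, None) => [set None; Some (ord0, Some i)]
  | Some (i, Some _) => [set Some (i, None); t]
  end.

Lemma edge_of_onto (x y : vtx) : extremal_adj x y -> exists t, edge_of t = [set x; y].
Proof.
move=> /and3P[/eqP same_block xy centers].
wlog cx : x y same_block xy centers / center x.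
  move=> wlog_cx; case/orP: (centers) => [|cy]; first exact: wlog_cx.
  by rewrite setUC; apply: wlog_cx; rewrite // 1?eq_sym 1?orbC.
case: x y same_block xy cx {centers} => [[i [b|]]|] [[j [c|]]|] //= ij xy _.
- by exists (Some (j, Some c)); rewrite ij.
- by move: xy; rewrite ij eqxx.
- by exists None; rewrite setUC ij.
- by exists (Some (c, None)); rewrite -ij.
- by exists None; rewrite -ij.
Qed.

Lemma extremal_edges_le : (num_edges extremal_adj <= #|{: vtx}|)%nat.
Proof.
rewrite /num_edges -cardsT; apply: leq_trans (leq_imset_card edge_of setT).
apply: subset_leq_card; apply/subsetP => A.
rewrite inE => /andP[_ /existsP[x /existsP[y /andP[/eqP -> xy]]]].
by have [t <-] := edge_of_onto xy; apply: imset_f; rewrite inE.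
Qed.

Lemma block_meet_le (S : {set vtx}) (i : 'I_k.+1) : k_independent k extremal_adj S ->
  (#|S :&: [set x | block x == i]| <= k.+1)%nat.
Proof.
move=> indS; apply: (k_independent_meet_le (D := [set x | (block x == i) && center x]) indS).
  move=> c; rewrite !inE => /andP[/eqP ci cc] y; rewrite inE => /eqP yi yc.
  by rewrite /extremal_adj ci yi eqxx eq_sym yc cc.
apply: leq_trans (_ : #|[set Some (i, Some b) | b in [set: 'I_k.+1]]| <= _)%nat.
  apply: subset_leq_card; apply/subsetP => -[[j [b|]]|]; rewrite !inE ?andbF ?andbT /=.
  - by move=> /eqP ->; apply: imset_f; rewrite inE.
  - by case: (j == i).
  - by case: (ord0 == i).
by apply: leq_trans (leq_imset_card _ _) _; rewrite cardsT card_ord.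
Qed.

Lemma alpha_extremal_le : (alpha_k k extremal_adj <= k.+1 * k.+1)%nat.
Proof.
apply/bigmax_leqP => S indS; rewrite (card_fibres block S).
apply: (@leq_trans (\sum_(i < k.+1) k.+1)).
  by apply: leq_sum => i _; apply: block_meet_le.
by rewrite sum_nat_const card_ord.
Qed.
End ExtremalGraph.

Local Open Scope R_scope.

Lemma avg_degree_le (T : finType) (e : rel T) (d : nat) : (0 < #|T|)%nat ->
  avg_degree e <= INR d <-> (2 * num_edges e <= d * #|T|)%nat.
Proof.
move=> n_gt0; have n_pos : 0 < INR #|T| by apply: lt_0_INR; apply/ltP.
have avg_eq : avg_degree e * INR #|T| = INR (2 * num_edges e).
  by rewrite /avg_degree mult_INR /=; field; apply: Rgt_not_eq.
split=> [le_d | le_nat].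
  by apply/leP/INR_le; rewrite -avg_eq mult_INR; apply: Rmult_le_compat_r; lra.
apply: (Rmult_le_reg_r (INR #|T|)) => //.
by rewrite avg_eq -mult_INR; apply/le_INR/leP.
Qed.

Lemma ratio_le (a b c d : nat) : (0 < b)%nat -> (0 < d)%nat -> (a * d <= c * b)%nat ->
  INR a / INR b <= INR c / INR d.
Proof.
move=> b_gt0 d_gt0 cross.
have b_pos : 0 < INR b by apply: lt_0_INR; apply/ltP.
have d_pos : 0 < INR d by apply: lt_0_INR; apply/ltP.
replace (INR a / INR b) with (INR a * INR d / (INR b * INR d)) by (field; lra).
replace (INR c / INR d) with (INR c * INR b / (INR b * INR d)) by (field; lra).
apply: Rmult_le_compat_r.
  by left; apply: Rinv_0_lt_compat; apply: Rmult_lt_0_compat.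
by rewrite -!mult_INR; apply: le_INR; apply/leP.
Qed.

Lemma inf_exists (P : R -> Prop) (b : R) : (exists x, P x) -> (forall x, P x -> b <= x) ->
  exists r, is_inf P r.
Proof.
move=> [x0 Px0] lb.
have bounded : bound (fun x => P (- x)) by exists (- b) => x Px; have := lb _ Px; lra.
have nonempty : exists x, P (- x) by exists (- x0); rewrite Ropp_involutive.
have [m [ub least]] := completeness _ bounded nonempty.
exists (- m); split=> [x Px | b' lb'].
  have : - x <= m by apply: ub; rewrite Ropp_involutive.
  lra.
have : m <= - b' by apply: least => x Px; have := lb' _ Px; lra.
lra.
Qed.

Lemma f_kd_is_inf (k d : nat) : (exists x, ratio_set k d x) ->
  is_inf (ratio_set k d) (f_kd k d).
Proof.
move=> nonempty.
have [r inf_r] : exists r, is_inf (ratio_set k d) r.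
  apply: (@inf_exists _ 0 nonempty) => _ [T [e [_ [n_gt0 [_ ->]]]]].
  apply: Rmult_le_pos; first exact: pos_INR.
  by apply/Rlt_le/Rinv_0_lt_compat/lt_0_INR/ltP.
exact: (epsilon_spec (inhabits R0) _ (ex_intro _ r inf_r)).
Qed.

Lemma ratio_set_lower (k : nat) (x : R) : ratio_set k 2 x -> INR k / INR (k + 1)%nat <= x.
Proof.
move=> [T [e [[e_sym e_irr] [n_gt0 [/(avg_degree_le e 2 n_gt0) edges_le ->]]]]].
apply: ratio_le => //; first by lia.
by have := alpha_k_lower e_sym e_irr k; nia.
Qed.

Lemma extremal_ratio (k : nat) :
  ratio_set k 2 (INR (alpha_k k (@extremal_adj k)) / INR (k.+1 * k.+2).+1).
Proof.
exists (option ('I_k.+1 * option 'I_k.+1) : finType), (@extremal_adj k).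
rewrite -card_vtx; split; first exact: extremal_simple.
split; first by rewrite card_vtx.
split=> //; apply/avg_degree_le; first by rewrite card_vtx.
exact: leq_mul (leqnn 2) (@extremal_edges_le k).
Qed.

Theorem mainTheorem13 (k : nat) (hk : (2 <= k)%nat) :
  INR k / INR (k + 1)%nat <= f_kd k 2 /\
  f_kd k 2 <= INR (k + 1)%nat / (INR (k + 2)%nat + 1 / INR (k + 1)%nat).
Proof.
have [f_lower f_greatest] := f_kd_is_inf (ex_intro _ _ (extremal_ratio k)).
split; first exact: f_greatest (@ratio_set_lower k).
apply: Rle_trans (f_lower _ (extremal_ratio k)) _.
have -> : INR (k + 1)%nat / (INR (k + 2)%nat + 1 / INR (k + 1)%nat) =
          INR (k.+1 * k.+1) / INR (k.+1 * k.+2).+1.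
  rewrite S_INR !mult_INR !plus_INR !S_INR /=.
  have k_ge0 := pos_INR k; field; nra.
apply: ratio_le => //; have := @alpha_extremal_le k; nia.
Qed.
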